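(* With the Fock space $\widetilde{\mathcal H}$, operators $M_k,A_k,D_k$ and vectors $\eta_k$ as in the context, let $R$ be a positive integer and $\varepsilon\colon\{1,\dots,R\}\to\{1,*\}$, $\iota\colon\{1,\dots,R\}\to\{1,\dots,N\}$. Suppose $\psi\colon\{1,\dots,R\}\to\mathcal L(\widetilde{\mathcal H})$ satisfies: (a) $\psi(1)\in\{M_{\iota(1)},A^*_{\iota(1)}\}$ if $\varepsilon(1)=1$, and $\psi(1)\in\{M^*_{\iota(1)},D^*_{\iota(1)}\}$ if $\varepsilon(1)=*$; (b) $\psi(R)\in\{M_{\iota(R)},D_{\iota(R)}\}$ if $\varepsilon(R)=1$, and $\psi(R)\in\{M^*_{\iota(R)},A_{\iota(R)}\}$ if $\varepsilon(R)=*$; (c) for $2\le j\le R-1$, $\psi(j)\in\{M_{\iota(j)}^{\varepsilon(j)},(A^*_{\iota(j)})^{\varepsilon(j)},D_{\iota(j)}^{\varepsilon(j)}\}$. Let $k,k'\in\{1,\dots,N\}$. Then $\langle\psi(1)\psi(2)\cdots\psi(R)\eta_k,\eta_{k'}\rangle=0$ unless $k=k'=\iota(1)=\iota(R)$ and there exists $\pi\in NC(R)$ such that (i) $\pi\in NC_{\mathrm{irr}}(R)$, (ii) for every block $(q_1<\dots<q_r)$ of $\pi$, $\iota(q_1)=\dots=\iota(q_r)$ and $\varepsilon(q_1)\ne\varepsilon(q_2)\ne\dots\ne\varepsilon(q_r)\ne\varepsilon(q_1)$, and $\psi=\varphi_\pi$, where $\varphi_\pi$ is defined by: $\varphi_\pi(j)=M_{\iota(j)}^{\varepsilon(j)}$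 for $j\in\{1,R\}$; for $2\le j\le R-1$ with $\varepsilon(j)=1$, $\varphi_\pi(j)$ is $D_{\iota(j)}$, $A^*_{\iota(j)}$ or $M_{\iota(j)}$ according as $j$ is the least element of its block, the greatest element of its block, or neither; for $2\le j\le R-1$ with $\varepsilon(j)=*$, $\varphi_\pi(j)$ is $A_{\iota(j)}$, $D^*_{\iota(j)}$ or $M^*_{\iota(j)}$ in the same three cases.
   Context: $\sigma_1,\dots,\sigma_N$ are compactly supported symmetric finite positive Borel measures on $\mathbf{R}$. $NC(R)$ is the set of noncrossing partitions of $\{1,\dots,R\}$ and $NC_{\mathrm{irr}}(R)$ those in which $1$ and $R$ lie in the same block. Fock model: let $\{e,f\}$ be an orthonormal basis of $\mathbf{C}^2$, $H_k^e=L^2(\sigma_k)\otimes\mathbf{C}e$, $H_k^f=L^2(\sigma_k)\otimes\mathbf{C}f$, $\mathcal H=\bigoplus_{k=1}^N(H_k^e\oplus H_k^f)$, $\widetilde{\mathcal H}=\bigoplus_{n\ge1}\mathcal H^{\otimes n}$ (no vacuum), with inner product $\langle\cdot,\cdot\rangle$. Let $\mathrm{id}_k\in L^2(\sigma_k)$ be $t\mapsto t$ and $1_k$ the constant $1$; $m_k\colon H_k^e\to H_k^f$, $m_k(F\otimes e)=(\mathrm{id}_k F)\otimes f$. For $v_1,\dots,v_n\in\mathcal H$: $M_k(v_1\otimes\cdots\otimes v_n)=m_k(P_{H_k^e}v_1)\otimes v_2\otimes\cdots\otimes v_n$ (so $M_k^*(v_1\otimes\cdots\otimes v_n)=m_k^*(P_{H_k^f}v_1)\otimes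 v_2\otimes\cdots\otimes v_n$), $A_k^*(v_1\otimes\cdots\otimes v_n)=(\mathrm{id}_k\otimes f)\otimes v_1\otimes\cdots\otimes v_n$, $D_k^*(v_1\otimes\cdots\otimes v_n)=(\mathrm{id}_k\otimes e)\otimes v_1\otimes\cdots\otimes v_n$; adjoints $A_k(v_1\otimes\cdots\otimes v_n)=\langle v_1,\mathrm{id}_k\otimes f\rangle v_2\otimes\cdots\otimes v_n$, $D_k(v_1\otimes\cdots\otimes v_n)=\langle v_1,\mathrm{id}_k\otimes e\rangle v_2\otimes\cdots\otimes v_n$ for $n\ge2$, and $A_kv=D_kv=0$ for $v\in\mathcal H$. $P_H$ is orthogonal projection onto $H$. For an operator $Z$, $Z^1=Z$ and $Z^*$ is its adjoint (so $(A_k^* )^*=A_k$). $\eta_k=1_k\otimes e+1_k\otimes f$. *)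

From mathcomp Require Import all_boot all_algebra all_classical all_reals all_analysis.
Set Implicit Arguments. Unset Strict Implicit. Unset Printing Implicit Defensive.
Import GRing.Theory Num.Theory.
Local Open Scope classical_set_scope.
Local Open Scope ring_scope.

(** Operator symbols.  For an index k : 'I_N,
    (KM,k) = M_k, (KMs,k) = M_k-star, (KAs,k) = A_k-star, (KA,k) = A_k,
    (KDs,k) = D_k-star, (KD,k) = D_k. *)
Inductive opkind := KM | KMs | KAs | KA | KDs | KD.

(** Exponent epsilon : bool, with [false] meaning "1" and [true] meaning "*".
    [pw Z s] is Z to the power s (e.g. pw KAs true = KA). *)
Definition pw (K : opkind) (s : bool) : opkind :=
  if s then match K with
            | KM => KMs | KMs => KM | KAs => KA | KA => KAs | KDs => KD | KD => KDs
            end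
  else K.

(** Algebraic Fock model (no vacuum).
    A factor (k, F, c) is the vector F (x) e  in H_k^e  if c = false,
    and F (x) f in H_k^f if c = true, with F a (real) function viewed in L^2(sigma_k).
    A tensor is an elementary tensor v_1 (x) ... (x) v_n of factors;
    a vector is a finite formal linear combination of elementary tensors. *)
Section Fock.
Variables (R : realType) (N : nat).
Variable sigma : 'I_N -> {finite_measure set R -> \bar R}.

Definition factor := ('I_N * (R -> R) * bool)%type.
Definition tensor := seq factor.
Definition vec := seq (R * tensor).

Definition ipf (a b : factor) : R :=
  if (a.1.1 == b.1.1) && (a.2 == b.2)
  then fine (\int[sigma a.1.1]_x ((a.1.2 x * b.1.2 x)%:E))
  else 0.

Definition ipt (s t : tensor) : R :=
  if size s == size t then \prod_(p <- zip s t) ipf p.1 p.2 else 0.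

Definition ipv (u v : vec) : R :=
  \sum_(a <- u) \sum_(b <- v) (a.1 * b.1 * ipt a.2 b.2).

Definition idf : R -> R := fun x => x.
Definition onef : R -> R := fun _ => 1.

Definition app_t (o : opkind * 'I_N) (t : tensor) : vec :=
  let k := o.2 in
  match o.1, t with
  | KM, (l, F, c) :: r =>
      (* M_k (v1 (x) r) = m_k (P_{H_k^e} v1) (x) r *)
      if (l == k) && ~~ c then [:: (1, (k, fun x => x * F x, true) :: r)] else [::]
  | KMs, (l, F, c) :: r =>
      (* M_k^* (v1 (x) r) = m_k^* (P_{H_k^f} v1) (x) r, m_k^*(F (x) f) = (id F) (x) e *)
      if (l == k) && c then [:: (1, (k, fun x => x * F x, false) :: r)] else [::]
  | KAs, _ => [:: (1, (k, idf, true) :: t)]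
  | KDs, _ => [:: (1, (k, idf, false) :: t)]
  | KA, v1 :: ((_ :: _) as r) => [:: (ipf v1 (k, idf, true), r)]
  | KD, v1 :: ((_ :: _) as r) => [:: (ipf v1 (k, idf, false), r)]
  | _, _ => [::]
  end.

Definition app_v (o : opkind * 'I_N) (v : vec) : vec :=
  flatten [seq [seq (a.1 * b.1, b.2) | b <- app_t o a.2] | a <- v].

Definition apply_ops (os : seq (opkind * 'I_N)) (v : vec) : vec :=
  foldr app_v v os.

Definition eta (k : 'I_N) : vec :=
  [:: (1, [:: (k, onef, false)]); (1, [:: (k, onef, true)])].

End Fock.

(** Noncrossing partitions of {1..R}, represented on 'I_R (0-based). *)
Definition noncrossing (R : nat) (P : {set {set 'I_R}}) : Prop :=
  forall B B' : {set 'I_R}, B \in P -> B' \in P -> B != B' ->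
  forall a b c d : 'I_R, (a < b)%N -> (b < c)%N -> (c < d)%N ->
    a \in B -> c \in B -> b \in B' -> d \in B' -> False.

Definition is_NC (R : nat) (P : {set {set 'I_R}}) : Prop :=
  finset.partition P [set: 'I_R] /\ noncrossing P.

Definition is_NC_irr (R : nat) (P : {set {set 'I_R}}) : Prop :=
  is_NC P /\
  forall i j : 'I_R, nat_of_ord i = 0%N -> nat_of_ord j = R.-1 ->
    exists2 B, B \in P & (i \in B) && (j \in B).

Definition block_ok (R N : nat) (iota : 'I_R -> 'I_N) (eps : 'I_R -> bool)
    (B : {set 'I_R}) : Prop :=
  [/\ (forall i j, i \in B -> j \in B -> iota i = iota j),
      (forall i j, i \in B -> j \in B -> (i < j)%N ->
          (forall l, l \in B -> ~ ((i < l)%N /\ (l < j)%N)) -> eps i <> eps j)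
    & (forall i j, i \in B -> j \in B ->
          (forall l, l \in B -> (i <= l)%N) -> (forall l, l \in B -> (l <= j)%N) ->
          eps i <> eps j)].

Definition phi_pi (R N : nat) (P : {set {set 'I_R}}) (iota : 'I_R -> 'I_N)
    (eps : 'I_R -> bool) (j : 'I_R) : opkind * 'I_N :=
  let least := [forall i in finset.pblock P j, (j <= i)%N] in
  let greatest := [forall i in finset.pblock P j, (i <= j)%N] in
  let K :=
    if (nat_of_ord j == 0%N) || (nat_of_ord j == R.-1) then pw KM (eps j)
    else if ~~ eps j then
      (if least then KD else if greatest then KAs else KM)
    else
      (if least then KA else if greatest then KDs else KMs) in
  (K, iota j).

(* Each operator sends an elementary tensor to a multiple of at most one elementary
   tensor, so a nonzero inner product forces a single chain of nonzero elementary
   tensors.  Read from right to left, the operators act on that tensor as on a stack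
   of factors y^d (x) e or y^d (x) f: A*_k and D*_k push id (x) f and id (x) e,
   M_k and M*_k multiply the top factor by id and swap e and f, and A_k, D_k pop it
   against id (x) f, id (x) e, which is nonzero only if index and colour match and
   d is odd, because odd moments of a symmetric measure vanish.  Grouping positions
   by the factor they act on gives pi: the stack discipline makes it noncrossing, the
   factor coming from eta_k puts 1 and R in one block, the colour swaps give the
   alternation of eps along blocks, and in each block the annihilation comes first
   and the creation last, which is psi = phi_pi. *)

From mathcomp Require Import all_boot all_algebra all_classical all_reals all_analysis.
From mathcomp Require Import measurable_realfun zify.
Set Implicit Arguments. Unset Strict Implicit. Unset Printing Implicit Defensive.
Import GRing.Theory Num.Theory.
Local Open Scope classical_set_scope.
Local Open Scope ring_scope.

Lemma odd_moment_eq0 (R : realType) (mu : {finite_measure set R -> \bar R}) m :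
  (forall A : set R, measurable A -> mu ((fun x : R => - x) @` A) = mu A) ->
  odd m -> fine (\int[mu]_x ((x ^+ m)%:E)) = 0.
Proof.
move=> mu_sym om; set f : R -> \bar R := fun x => (x ^+ m)%:E.
pose opp := fun x : R => - x.
have mf : measurable_fun [set: R] f.
  by apply/measurable_EFinP; exact: exprn_measurable.
have mopp : measurable_fun [set: R] opp by exact: oppr_measurable.
have fneg_pos x : (f^\- x = f^\+ (opp x))%E.
  rewrite funenegE funeposE /f /opp exprNn -signr_odd om expr1 mulN1r.
  by rewrite EFinN.
have neg_pos : (\int[mu]_x f^\- x = \int[mu]_x f^\+ x)%E.
  transitivity (\int[mu]_(x in opp @^-1` setT) ((f^\+ \o opp) x))%E.
    by rewrite preimage_setT; apply: eq_integral => x _; rewrite fneg_pos.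
  rewrite -(ge0_integral_pushforward mopp _ measurableT (measurable_funepos mf));
    last by move=> y _; exact: funepos_ge0.
  apply: eq_measure_integral => A mA _.
  change (mu (opp @^-1` A) = mu A); rewrite -(mu_sym A mA).
  congr (mu _); apply/seteqP; split => x /=.
  - by move=> Ax; exists (- x) => //; rewrite /opp opprK.
  - by case=> y Ay <-; rewrite /opp opprK.
rewrite integralE neg_pos.
by case: (\int[mu]_x f^\+ x)%E => [r| |] //=; rewrite subrr.
Qed.

Definition creator (e : bool) : opkind := if e then KDs else KAs.
Definition annihilator (e : bool) : opkind := if e then KA else KD.
Definition is_creation (K : opkind) : bool := if K is (KAs | KDs) then true else false.

Lemma is_creation_pwKM e : is_creation (pw KM e) = false. Proof. by case: e. Qed.
Lemma is_creation_creator e : is_creation (creator e). Proof. by case: e. Qed.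
Lemma is_creation_annihilator e : is_creation (annihilator e) = false.
Proof. by case: e. Qed.

Section FockAlgebra.
Variables (R : realType) (N : nat) (sigma : 'I_N -> {finite_measure set R -> \bar R}).

Lemma app_v_cat o (u w : vec R N) :
  app_v sigma o (u ++ w) = app_v sigma o u ++ app_v sigma o w.
Proof. by rewrite /app_v map_cat flatten_cat. Qed.

Lemma apply_ops_cat os (u w : vec R N) :
  apply_ops sigma os (u ++ w) = apply_ops sigma os u ++ apply_ops sigma os w.
Proof. by elim: os => //= o os ->; rewrite app_v_cat. Qed.

Lemma ipv_catl (u w v : vec R N) : ipv sigma (u ++ w) v = ipv sigma u v + ipv sigma w v.
Proof. by rewrite /ipv big_cat. Qed.

Lemma app_v_seq1 o a (t : tensor R N) :
  app_v sigma o [:: (a, t)] = [seq (a * b.1, b.2) | b <- app_t sigma o t].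
Proof. by rewrite /app_v /= cats0. Qed.

Lemma size_app_t o (t : tensor R N) : (size (app_t sigma o t) <= 1)%N.
Proof.
by case: o => -[] i; case: t => [|[[l F] c] [|w r]] //=; rewrite /app_t /=; case: ifP.
Qed.

Lemma size_app_v o (v : vec R N) :
  (size v <= 1)%N -> (size (app_v sigma o v) <= 1)%N.
Proof.
by case: v => [|[a t] [|? ?]] // _; rewrite app_v_seq1 size_map size_app_t.
Qed.

Lemma app_t_pwKM e i (t : tensor R N) :
  app_t sigma (pw KM e, i) t =
  if t is (l, F, c) :: r then
    (if (l == i) && (c == e) then [:: (1, (i, fun x => x * F x, ~~ e) :: r)] else [::])
  else [::].
Proof.
by case: e; case: t => [|[[l F] c] r] //=; rewrite /app_t /=; case: c; rewrite ?andbT ?andbF.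
Qed.

Lemma app_t_creator e i (t : tensor R N) :
  app_t sigma (creator e, i) t = [:: (1, (i, @idf R, ~~ e) :: t)].
Proof. by case: e; case: t. Qed.

Lemma app_t_annihilator e i (t : tensor R N) :
  app_t sigma (annihilator e, i) t =
  if t is v1 :: ((_ :: _) as r) then [:: (ipf sigma v1 (i, @idf R, e), r)] else [::].
Proof. by case: e; case: t => [|v1 [|w r]]. Qed.

End FockAlgebra.

(** * Factors as a stack *)

(* A slot stands for the factor y^degree (x) (if colour then f else e), created by the
   operator at position [origin]; the factor of the initial vector has the last position. *)
Record slot := Slot { origin : nat; degree : nat; colour : bool }.

Definition stack_step N (o : opkind * 'I_N) (j : nat) (g : seq slot) : seq slot :=
  match o.1 with
  | KM | KMs => if g is Slot x d c :: r then Slot x d.+1 (~~ c) :: r else [::]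
  | KAs => Slot j 1 true :: g
  | KDs => Slot j 1 false :: g
  | KA | KD => behead g
  end.

Definition origins (g : seq slot) : seq nat := map origin g.

Fixpoint colour_at (y : nat) (g : seq slot) : option bool :=
  if g is s :: r then (if origin s == y then Some (colour s) else colour_at y r) else None.

Lemma stack_step_pwKM N e (i : 'I_N) j x d c g :
  stack_step (pw KM e, i) j (Slot x d c :: g) = Slot x d.+1 (~~ c) :: g.
Proof. by case: e. Qed.

Lemma stack_step_creator N e (i : 'I_N) j g :
  stack_step (creator e, i) j g = Slot j 1 (~~ e) :: g.
Proof. by case: e. Qed.

Lemma stack_step_annihilator N e (i : 'I_N) j g :
  stack_step (annihilator e, i) j g = behead g.
Proof. by case: e. Qed.

Section Run.
Variables (R : realType) (N : nat) (sigma : 'I_N -> {finite_measure set R -> \bar R}).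
Hypothesis sigma_sym : forall (k : 'I_N) (A : set R), measurable A ->
  sigma k ((fun x : R => - x) @` A) = sigma k A.
Variables (n : nat) (eps : 'I_n.+1 -> bool) (lab : 'I_n.+1 -> 'I_N)
  (psi : 'I_n.+1 -> opkind * 'I_N).
Hypothesis psi_first : forall j : 'I_n.+1, nat_of_ord j = 0%N ->
  if eps j then psi j = (KMs, lab j) \/ psi j = (KDs, lab j)
  else psi j = (KM, lab j) \/ psi j = (KAs, lab j).
Hypothesis psi_last : forall j : 'I_n.+1, nat_of_ord j = n ->
  if eps j then psi j = (KMs, lab j) \/ psi j = (KA, lab j)
  else psi j = (KM, lab j) \/ psi j = (KD, lab j).
Hypothesis psi_mid : forall j : 'I_n.+1, (0 < j)%N -> (j < n)%N ->
  [\/ psi j = (pw KM (eps j), lab j), psi j = (pw KAs (eps j), lab j)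
    | psi j = (pw KD (eps j), lab j)].
Variables (k k' : 'I_N) (c0 : bool).

Definition op (j : nat) := psi (inord j).
Definition epsn (j : nat) := eps (inord j).
Definition labn (j : nat) := lab (inord j).

Lemma opE (i : 'I_n.+1) : op i = psi i. Proof. by rewrite /op inord_val. Qed.
Lemma epsnE (i : 'I_n.+1) : epsn i = eps i. Proof. by rewrite /epsn inord_val. Qed.
Lemma labnE (i : 'I_n.+1) : labn i = lab i. Proof. by rewrite /labn inord_val. Qed.


Lemma op_shape j : (j <= n)%N ->
  [\/ op j = (pw KM (epsn j), labn j), op j = (creator (epsn j), labn j)
    | op j = (annihilator (epsn j), labn j)].
Proof.
move=> jn; have jE : nat_of_ord (inord j : 'I_n.+1) = j by rewrite inordK.
rewrite /op /epsn /labn; case: (posnP j) => [j0|j_gt0].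
  have := @psi_first (inord j); rewrite jE => /(_ j0).
  by case: (eps _) => -[->|->]; [apply: Or31|apply: Or32|apply: Or31|apply: Or32].
case: (ltngtP j n) jn => // [j_lt|j_eq] _.
  have := @psi_mid (inord j); rewrite jE => /(_ j_gt0 j_lt).
  by case: (eps _) => -[->|->|->];
    [apply: Or31|apply: Or33|apply: Or32|apply: Or31|apply: Or32|apply: Or33].
have := @psi_last (inord j); rewrite jE => /(_ j_eq).
by case: (eps _) => -[->|->]; [apply: Or31|apply: Or33|apply: Or31|apply: Or33].
Qed.

Lemma last_not_creation : ~~ is_creation (op n).1.
Proof.
have := @psi_last (inord n); rewrite inordK // => /(_ erefl); rewrite /op.
by case: (eps _) => -[->|->].
Qed.

Lemma first_not_annihilator : op 0 <> (annihilator (epsn 0), labn 0).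
Proof.
have := @psi_first (inord 0); rewrite inordK // => /(_ erefl); rewrite /op /epsn.
by case: (eps _) => -[->|->].
Qed.

Definition init : vec R N := [:: (1, [:: (k, @onef R, c0)])].
Definition run_vec j := foldr (fun i v => app_v sigma (op i) v) init (iota j (n.+1 - j)).
Definition stack j :=
  foldr (fun i g => stack_step (op i) i g) [:: Slot n 0 c0] (iota j (n.+1 - j)).
Hypothesis run_nz : ipv sigma (run_vec 0) (eta R k') != 0.

Lemma run_vecS j : (j <= n)%N -> run_vec j = app_v sigma (op j) (run_vec j.+1).
Proof. by move=> jn; rewrite /run_vec subSn //= subSS. Qed.

Lemma stackS j : (j <= n)%N -> stack j = stack_step (op j) j (stack j.+1).
Proof. by move=> jn; rewrite /stack subSn //= subSS. Qed.

Lemma stack_end : stack n.+1 = [:: Slot n 0 c0].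
Proof. by rewrite /stack subnn. Qed.

Lemma run_vec0E : run_vec 0 = apply_ops sigma [seq psi j | j <- enum 'I_n.+1] init.
Proof.
rewrite /run_vec subn0 /apply_ops -val_enum_ord !foldr_map.
by congr foldr; apply: funext => i; rewrite opE.
Qed.

Definition run_coef j := (head (0, [::]) (run_vec j)).1.
Definition run_tensor j := (head (0, [::]) (run_vec j)).2.

Lemma run_vecE j : (j <= n.+1)%N ->
  run_vec j = [:: (run_coef j, run_tensor j)] /\ run_coef j != 0.
Proof.
have size_run i : (size (run_vec i) <= 1)%N.
  by rewrite /run_vec; elim: (iota _ _) => // m l IH; exact: size_app_v.
elim: j => [|j IH] jn.
  move: run_nz (size_run 0%N); rewrite /run_coef /run_tensor.
  case: (run_vec 0) => [|[a t] [|? ?]] //; first by rewrite /ipv big_nil eqxx.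
  move=> nz _; split => //; apply: contraNneq nz => /= ->.
  by rewrite /ipv big_seq1 big1 // => b _; rewrite !mul0r.
have [Ej aj] := IH (ltnW jn); rewrite run_vecS // in Ej.
move: (size_run j.+1); rewrite /run_coef /run_tensor.
case E: (run_vec j.+1) => [|[a t] [|? ?]] // _; rewrite E in Ej; first by [].
split => //=; apply: contraNneq aj => a0.
move: Ej; rewrite app_v_seq1 a0.
by case: (app_t _ _ _) => [|[s u] ?] //= [<- _]; rewrite mul0r.
Qed.

Lemma run_step j : (j <= n)%N ->
  exists2 s, app_t sigma (op j) (run_tensor j.+1) = [:: (s, run_tensor j)] & s != 0.
Proof.
move=> jn; have [Ej aj] := run_vecE (leqW jn).
have [Ej1 _] := run_vecE (jn : (j.+1 <= n.+1)%N).
move: Ej; rewrite run_vecS // Ej1 app_v_seq1.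
move: (size_app_t sigma (op j) (run_tensor j.+1)).
case: (app_t _ _ _) => [|[s t] [|? ?]] //= _ [Ea Et].
by exists s; rewrite ?Et //; apply: contraNneq aj => s0; rewrite -Ea s0 mulr0.
Qed.

Definition slot_index x := if x == n then k else labn x.
Definition even_colour x := if x == n then c0 else epsn x.
Definition slot_factor (s : slot) :=
  (slot_index (origin s), fun y : R => y ^+ degree s, colour s).

Fixpoint stack_wf j (g : seq slot) : bool :=
  match g with
  | [::] => false
  | [:: s] => origin s == n
  | s :: r => [&& (j <= origin s < n)%N, is_creation (op (origin s)).1,
                  all (fun t => origin s < origin t)%N r & stack_wf j r]
  end.

Definition colours_ok (g : seq slot) :=
  all (fun s => colour s == even_colour (origin s) (+) odd (degree s)) g.

Definition run_inv j :=
  [/\ run_tensor j = map slot_factor (stack j), stack_wf j (stack j)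
    & colours_ok (stack j)].

(* The slot [op j] acts on: the one it creates, or else the top slot just before it
   acts.  These slots index the blocks of pi. *)
Definition acting_time j := if is_creation (op j).1 then j else j.+1.
Definition block j := origin (head (Slot 0 0 false) (stack (acting_time j))).

Definition step_spec j : Prop :=
  [\/ op j = (pw KM (epsn j), labn j) /\ exists d g,
        [/\ stack j.+1 = Slot (block j) d (epsn j) :: g,
            stack j = Slot (block j) d.+1 (~~ epsn j) :: g
          & labn j = slot_index (block j)],
      [/\ op j = (creator (epsn j), labn j), block j = j,
          stack j = Slot j 1 (~~ epsn j) :: stack j.+1 & (j < n)%N]
    | op j = (annihilator (epsn j), labn j) /\ exists d s g,
        [/\ stack j.+1 = Slot (block j) d (epsn j) :: s :: g, stack j = s :: g,
            labn j = slot_index (block j) & odd d]].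

Lemma stack_wf_le i j g : (i <= j)%N -> stack_wf j g -> stack_wf i g.
Proof.
move=> ij; elim: g => [|s [|t r] IH] //=.
by case/and4P=> /andP[js ->] -> -> /IH wf; rewrite (leq_trans ij js).
Qed.

Lemma stack_wf_recolour_top j x d c d' c' g :
  stack_wf j (Slot x d c :: g) = stack_wf j (Slot x d' c' :: g).
Proof. by case: g. Qed.

Lemma stack_wf_origins j g :
  stack_wf j g -> all (fun s => (j <= origin s)%N || (origin s == n)) g.
Proof.
elim: g => [|s [|t r] IH] //=; first by move=> ->; rewrite orbT.
by case/and4P=> /andP[-> _] _ _ /IH.
Qed.

Lemma stack_wf_origin j g y : stack_wf j g -> y \in origins g ->
  y = n \/ ((j <= y < n)%N /\ is_creation (op y).1).
Proof.
elim: g => [|s [|t r] IH] //=; first by move=> /eqP <-; rewrite inE => /eqP ->; left.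
case/and4P => s_range s_cr _ wf_r; rewrite in_cons => /orP[/eqP ->|y_r]; first by right.
exact: IH.
Qed.

Lemma stack_wf_bottom j g : stack_wf j g -> n \in origins g.
Proof.
elim: g => [|s [|t r] IH] //=; first by move=> /eqP ->; rewrite inE.
by case/and4P => _ _ _ /IH n_r; rewrite in_cons n_r orbT.
Qed.

Lemma stack_wf_top_lt j s g y : stack_wf j (s :: g) -> y \in origins g -> (origin s < y)%N.
Proof.
case: g => [|t r] // /= /and4P[_ _ lt_r _].
have /allP : all (fun y => origin s < y)%N (origins (t :: r)) by rewrite all_map.
exact.
Qed.

Lemma run_inv_end : run_inv n.+1.
Proof.
rewrite /run_inv /run_tensor stack_end /run_vec subnn /= /colours_ok /= /even_colour.
by rewrite /slot_factor /slot_index /= eqxx addbF eqxx.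
Qed.

Lemma acting_time_noncreation j : ~~ is_creation (op j).1 -> acting_time j = j.+1.
Proof. by rewrite /acting_time => /negbTE ->. Qed.

Lemma run_inv_pwKM j : (j <= n)%N -> run_inv j.+1 ->
  op j = (pw KM (epsn j), labn j) -> run_inv j /\ step_spec j.
Proof.
move=> jn [Tj1 wf ok] Hp; have [s Hs _] := run_step jn; have Gj := stackS jn.
have bj : block j = origin (head (Slot 0 0 false) (stack j.+1)).
  by rewrite /block acting_time_noncreation // Hp is_creation_pwKM.
rewrite Hp Tj1 app_t_pwKM in Hs; rewrite Hp in Gj.
move: wf ok Hs Gj bj; case Ej1: (stack j.+1) => [|[x d c] g] //= wf ok.
case: ifP => // /andP[/eqP xj /eqP ce] [_ Tj]; subst c.
rewrite stack_step_pwKM => Gj bj.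
split; last by apply: Or31; split => //; exists d, g; rewrite Ej1 Gj bj xj.
split.
- rewrite -Tj Gj /= /slot_factor /= xj; congr ((_, _, _) :: _).
  by apply: funext => y; rewrite exprS.
- by rewrite Gj (stack_wf_recolour_top _ _ _ _ d (epsn j)) (stack_wf_le (leqnSn j)).
- by move: ok; rewrite Gj /colours_ok /= => /andP[/eqP -> ->]; rewrite /= addbN eqxx.
Qed.

Lemma run_inv_creator j : (j <= n)%N -> run_inv j.+1 ->
  op j = (creator (epsn j), labn j) -> run_inv j /\ step_spec j.
Proof.
move=> jn [Tj1 wf ok] Hp; have [s Hs _] := run_step jn; have Gj := stackS jn.
rewrite Hp app_t_creator in Hs; case: Hs => _ Tj.
rewrite Hp stack_step_creator in Gj.
have j_lt : (j < n)%N.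
  rewrite ltn_neqAle jn andbT; apply: contraNneq last_not_creation => <-.
  by rewrite Hp is_creation_creator.
have jnn : (j == n) = false by rewrite ltn_eqF.
have bj : block j = j by rewrite /block /acting_time Hp is_creation_creator Gj.
split; last by apply: Or32.
split.
- rewrite -Tj Gj Tj1 /= /slot_factor /slot_index /= jnn.
  by congr ((_, _, _) :: _); apply: funext => y; rewrite expr1.
- move: wf (stack_wf_origins wf); rewrite Gj; case: (stack j.+1) => [|t g] // wf_tg orig.
  apply/and4P; split; [by rewrite leqnn j_lt | by rewrite Hp is_creation_creator | |].
  + by apply: sub_all orig => u /orP[//|/eqP ->].
  + exact: stack_wf_le (leqnSn j) wf_tg.
- by rewrite Gj /colours_ok /= /even_colour jnn addbT eqxx.
Qed.

Lemma run_inv_annihilator j : (j <= n)%N -> run_inv j.+1 ->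
  op j = (annihilator (epsn j), labn j) -> run_inv j /\ step_spec j.
Proof.
move=> jn [Tj1 wf ok] Hp; have [s Hs s0] := run_step jn; have Gj := stackS jn.
have bj : block j = origin (head (Slot 0 0 false) (stack j.+1)).
  by rewrite /block acting_time_noncreation // Hp is_creation_annihilator.
rewrite Hp app_t_annihilator Tj1 in Hs; rewrite Hp stack_step_annihilator in Gj.
move: wf ok Hs Gj bj s0.
case Ej1: (stack j.+1) => [|[x d c] [|t g]] //= wf ok [<- Tj] Gj bj.
rewrite /ipf /=; case: ifP => [/andP[/eqP xj /eqP ce] ipf_nz|]; last by rewrite eqxx.
subst c.
have d_odd : odd d.
  apply: contraNT ipf_nz => d_even.
  have -> : (fun y => (y ^+ d * idf y)%:E) = (fun y : R => (y ^+ d.+1)%:E).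
    by apply: funext => y; rewrite exprSr.
  by rewrite odd_moment_eq0 //= => A; exact: sigma_sym.
split; last by apply: Or33; split => //; exists d, t, g; rewrite Ej1 Gj bj xj.
rewrite /run_inv -Tj Gj; split => //; last by case/andP: ok.
case/and4P: wf => _ _ _ wf_tg.
exact: (stack_wf_le (leqnSn j) (wf_tg : stack_wf _ (t :: g))).
Qed.

Lemma run_inv_step j : (j <= n)%N -> run_inv j.+1 -> run_inv j /\ step_spec j.
Proof.
move=> jn inv; case: (op_shape jn) => Hp.
- exact: run_inv_pwKM.
- exact: run_inv_creator.
- exact: run_inv_annihilator.
Qed.

Lemma run_inv_all j : (j <= n.+1)%N -> run_inv j.
Proof.
move=> jn; rewrite -(subKn jn); elim: (n.+1 - j)%N (leq_subr j n.+1) => [|m IH] mn.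
  by rewrite subn0; exact: run_inv_end.
have inv := IH (ltnW mn); rewrite subSn // in inv.
by rewrite subSS; case: (run_inv_step (leq_subr m n) inv).
Qed.

Lemma step_spec_all j : (j <= n)%N -> step_spec j.
Proof. by move=> jn; have [] := run_inv_step jn (run_inv_all (jn : (j.+1 <= n.+1)%N)). Qed.

Lemma final_pairing : k = k' /\ exists d c, stack 0 = [:: Slot n d c] /\ ~~ odd d.
Proof.
have [E0 _] := run_vecE (leq0n _); have [T0 wf _] := run_inv_all (leq0n n.+1).
move: run_nz; rewrite E0 T0 /ipv big_seq1 /eta big_cons big_seq1 /=.
move: wf; case: (stack 0) => [|[x d c] [|s g]] //=; last first.
  by move=> _; rewrite /ipt /= !mulr0 addr0 eqxx.
move=> /eqP xn nz; rewrite /ipt /= !big_seq1 /ipf /= in nz.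
have xk' : slot_index x = k'.
  by apply/eqP; apply: contraNT nz => /negbTE ->; rewrite /= !mulr0 addr0.
have moment0 : odd d -> fine (\int[sigma (slot_index x)]_y ((y ^+ d * onef y)%:E)) = 0.
  move=> d_odd; have -> : (fun y => (y ^+ d * onef y)%:E) = (fun y : R => (y ^+ d)%:E).
    by apply: funext => y; rewrite /onef mulr1.
  by rewrite odd_moment_eq0 // => A; exact: sigma_sym.
split; first by rewrite -xk' xn /slot_index eqxx.
exists d, c; rewrite xn; split => //.
by apply: contraNN nz => d_odd; rewrite moment0 // !if_same !mulr0 addr0 eqxx.
Qed.

(** * Lifetimes of slots *)

Definition alive j y := y \in origins (stack j).

Lemma alive_range j y : (j <= n.+1)%N -> alive j y ->
  y = n \/ ((j <= y < n)%N /\ is_creation (op y).1).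
Proof. by move=> jn; have [_ wf _] := run_inv_all jn; exact: stack_wf_origin. Qed.

Lemma alive_bottom j : (j <= n.+1)%N -> alive j n.
Proof. by move=> jn; have [_ wf _] := run_inv_all jn; exact: stack_wf_bottom wf. Qed.

Lemma alive_gt_top j s g y : (j <= n.+1)%N -> stack j = s :: g ->
  alive j y -> y != origin s -> (origin s < y)%N.
Proof.
move=> jn Ej; have [_ wf _] := run_inv_all jn; rewrite /alive Ej in wf *.
rewrite /= in_cons => /orP[/eqP ->|y_g]; first by rewrite eqxx.
by move=> _; exact: stack_wf_top_lt wf y_g.
Qed.

Lemma top_not_below j s g : (j <= n.+1)%N -> stack j = s :: g -> origin s \notin origins g.
Proof.
move=> jn Ej; have [_ wf _] := run_inv_all jn; rewrite Ej in wf.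
by apply/negP => /(stack_wf_top_lt wf); rewrite ltnn.
Qed.

Lemma alive_born j y : (j <= n)%N -> ~~ alive j.+1 y -> alive j y -> y = j.
Proof.
move=> jn; rewrite /alive.
case: (step_spec_all jn) => [[_ [d [g [-> -> _]]]]|[_ _ -> _]|[_ [d [s [g [-> -> _ _]]]]]] /=.
- by rewrite !in_cons => /negbTE ->.
- by rewrite in_cons => /negbTE ->; rewrite orbF => /eqP.
- by rewrite !in_cons => /norP[_ /negbTE ->].
Qed.

Lemma not_alive_down p q y : (p <= q)%N -> (q <= n.+1)%N -> ~~ alive q y ->
  (forall m, (p <= m < q)%N -> m <> y) -> ~~ alive p y.
Proof.
move=> pq; elim: q pq => [|q IH] pq qn y_dead not_born.
  by rewrite leqn0 in pq; rewrite (eqP pq).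
move: pq; rewrite leq_eqVlt => /orP[/eqP -> //|pq].
have qy : q <> y by apply: not_born; rewrite -ltnS pq ltnSn.
apply: IH => //; [exact: ltnW | | by move=> m /andP[pm mq]; apply: not_born; rewrite pm ltnW].
by apply/negP => y_alive; apply: qy; rewrite (alive_born qn y_dead y_alive).
Qed.

Lemma alive_between p r q y : (p <= r)%N -> (r <= q)%N -> (q <= n.+1)%N ->
  alive p y -> alive q y -> alive r y.
Proof.
move=> pr rq qn yp yq.
case: (alive_range qn yq) => [->|[/andP[qy _] _]]; first exact: alive_bottom (leq_trans rq qn).
apply: contraLR yp => yr; apply: not_alive_down pr (leq_trans rq qn) yr _ => m /andP[_ mr] my.
by move: (leq_trans (leq_trans mr rq) qy); rewrite my ltnn.
Qed.

Lemma death_time p q y : (p <= q)%N -> (q <= n.+1)%N -> alive q y -> ~~ alive p y ->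
  exists m, [/\ (p <= m < q)%N, alive m.+1 y & ~~ alive m y].
Proof.
move=> pq; elim: q pq => [|q IH] pq qn yq yp.
  by rewrite leqn0 in pq; rewrite (eqP pq) yq in yp.
move: pq; rewrite leq_eqVlt => /orP[/eqP pE|pq]; first by rewrite pE yq in yp.
case yq': (alive q y).
  have [m [/andP[pm mq] h1 h2]] := IH pq (ltnW qn) yq' yp.
  by exists m; rewrite pm ltnS ltnW.
by exists q; rewrite -ltnS pq ltnSn yq yq'.
Qed.

Lemma acting_time_ge j : (j <= acting_time j)%N.
Proof. by rewrite /acting_time; case: ifP. Qed.

Lemma acting_time_le j : (acting_time j <= j.+1)%N.
Proof. by rewrite /acting_time; case: ifP. Qed.

Lemma acting_time_bound j : (j <= n)%N -> (acting_time j <= n.+1)%N.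
Proof. by move=> jn; apply: leq_trans (acting_time_le j) _. Qed.

Lemma acting_time_mono i j : (i < j)%N -> (acting_time i <= acting_time j)%N.
Proof.
by move=> ij; apply: leq_trans (acting_time_le i) (leq_trans ij (acting_time_ge j)).
Qed.

Lemma block_alive j : (j <= n)%N -> alive (acting_time j) (block j).
Proof.
move=> jn; have := alive_bottom (acting_time_bound jn).
by rewrite /alive /block; case: (stack _) => [|s g] //= _; rewrite in_cons eqxx.
Qed.

Lemma block_lt_alive j y : (j <= n)%N -> alive (acting_time j) y -> y != block j ->
  (block j < y)%N.
Proof.
move=> jn y_alive; rewrite /block.
case E: (stack (acting_time j)) => [|s g] /=; first by move: y_alive; rewrite /alive E.
exact: alive_gt_top (acting_time_bound jn) E y_alive.
Qed.

Lemma block_range j : (j <= n)%N ->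
  block j = n \/ ((j <= block j < n)%N /\ is_creation (op (block j)).1).
Proof.
move=> jn; have tn := acting_time_bound jn.
case: (alive_range tn (block_alive jn)) => [->|[/andP[h1 ->] ->]]; first by left.
by right; rewrite (leq_trans (acting_time_ge j) h1).
Qed.

Lemma block_gt j : (j <= n)%N -> ~~ is_creation (op j).1 -> block j != n -> (j < block j)%N.
Proof.
move=> jn nc bn; have := block_alive jn; rewrite acting_time_noncreation // => b_alive.
case: (alive_range (jn : (j.+1 <= n.+1)%N) b_alive) => [/eqP|[/andP[]]] //.
by rewrite (negbTE bn).
Qed.

Lemma block_creation x : (x <= n)%N -> is_creation (op x).1 -> block x = x.
Proof.
move=> xn cx; case: (step_spec_all xn) => [[Hp _]|[_ -> _ _]|[Hp _]] //.
- by move: cx; rewrite Hp is_creation_pwKM.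
- by move: cx; rewrite Hp is_creation_annihilator.
Qed.

Lemma death_annihilates m y : (m <= n)%N -> alive m.+1 y -> ~~ alive m y ->
  block m = y /\ op m = (annihilator (epsn m), labn m).
Proof.
move=> mn; rewrite /alive.
case: (step_spec_all mn) => [[_ [d [g [-> -> _]]]]|[_ _ -> _]|[Hp [d [s [g [-> -> _ _]]]]]] /=.
- by rewrite !in_cons => y1 /negbTE y0; move: y1; rewrite y0.
- by rewrite in_cons => y1 /norP[_ /negbTE y0]; move: y1; rewrite y0.
- by rewrite in_cons => /orP[/eqP ->|->].
Qed.

Lemma block_ge_death m x : (m <= n)%N -> alive m.+1 x -> ~~ alive m x ->
  forall i, (i <= n)%N -> block i = x -> (m <= i)%N.
Proof.
move=> mn x1 x0 i iN bi; rewrite leqNgt; apply/negP => im.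
have x_alive : alive (acting_time i) x by rewrite -bi; exact: block_alive.
have := alive_between (leq_trans (acting_time_le i) im) (leqnSn m) mn x_alive x1.
by rewrite (negbTE x0).
Qed.

Lemma labn_block j : (j <= n)%N -> labn j = slot_index (block j).
Proof.
move=> jn; case: (step_spec_all jn) =>
  [[_ [d [g [_ _ ->]]]]|[_ -> _ j_lt]|[_ [d [s [g [_ _ -> _]]]]]] //.
by rewrite /slot_index ltn_eqF.
Qed.

Lemma run_boundary :
  [/\ block 0 = n, block n = n, op 0 = (pw KM (epsn 0), labn 0),
      op n = (pw KM (epsn n), labn n) & epsn 0 = ~~ epsn n].
Proof.
have [_ [d0 [c1 [E0 d0_even]]]] := final_pairing.
have [bn Hpn c0n] : [/\ block n = n, op n = (pw KM (epsn n), labn n) & c0 = epsn n].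
  case: (step_spec_all (leqnn n)) =>
    [[Hpn [d [g [E1 _ _]]]]|[_ _ _]|[_ [d [s [g [E1 _ _ _]]]]]].
  - by move: E1; rewrite stack_end => -[bE _ cE _]; rewrite -bE cE.
  - by rewrite ltnn.
  - by move: E1; rewrite stack_end.
have [_ _ ok1] := run_inv_all (isT : (1 <= n.+1)%N).
case: (step_spec_all (leq0n n)) => [[Hp0 [d [g [E1 E0' _]]]]|[_ _ E0' _]|[Hp0 _]].
- move: E0'; rewrite E0 => -[b0 dE _ _]; move: ok1.
  rewrite E1 /colours_ok /= -b0 /even_colour eqxx => /andP[/eqP e0 _].
  have d_odd : odd d by move: d0_even; rewrite dE /= negbK.
  by split => //; rewrite e0 d_odd c0n addbT.
- move: E0'; rewrite E0 => -[_ _ _ E1].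
  by move: (alive_bottom (isT : (1 <= n.+1)%N)); rewrite /alive -E1.
- by have := first_not_annihilator.
Qed.

Lemma annihilator_first j : (j <= n)%N -> op j = (annihilator (epsn j), labn j) ->
  forall i, (i <= n)%N -> block i = block j -> (j <= i)%N.
Proof.
move=> jn Hp; case: (step_spec_all jn) => [[Hp' _]|[Hp' _ _ _]|[_ [d [s [g [E1 E0 _ _]]]]]].
- by move: Hp'; rewrite Hp; case: (epsn j).
- by move: Hp'; rewrite Hp; case: (epsn j).
apply: block_ge_death => //; first by rewrite /alive E1 /= in_cons eqxx.
by rewrite /alive E0; exact: (top_not_below (jn : (j < n.+1)%N) E1).
Qed.

Lemma creation_block x : (x < n)%N -> is_creation (op x).1 -> exists a,
  [/\ (a < x)%N, block a = x, op a = (annihilator (epsn a), labn a), epsn a = ~~ epsn x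
    & forall i, (i <= n)%N -> block i = x -> (a <= i <= x)%N].
Proof.
move=> x_lt cx; have xn := ltnW x_lt.
have x_alive : alive x x.
  by have := block_alive xn; rewrite /acting_time cx (block_creation xn cx).
have [_ [d0 [c1 [E0 _]]]] := final_pairing.
have x_dead : ~~ alive 0 x by rewrite /alive E0 /= in_cons orbF ltn_eqF.
have [a [/andP[_ ax] a1 a0]] := death_time (leq0n x) (leq_trans xn (leqnSn n)) x_alive x_dead.
have an : (a <= n)%N := ltnW (ltn_trans ax x_lt).
have [ba Hpa] := death_annihilates an a1 a0.
exists a; split => //.
- case: (step_spec_all an) => [[Hp _]|[Hp _ _ _]|[_ [d [s [g [E1 _ _ d_odd]]]]]].
  + by move: Hp; rewrite Hpa; case: (epsn a).
  + by move: Hp; rewrite Hpa; case: (epsn a).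
  have [_ _ ok] := run_inv_all (an : (a < n.+1)%N).
  move: ok; rewrite E1 /colours_ok /= ba /even_colour ltn_eqF // d_odd addbT.
  by case/andP => /eqP.
- move=> i iN bi; rewrite (block_ge_death an a1 a0 iN bi) /=.
  case ci: (is_creation (op i).1); first by rewrite -bi (block_creation iN ci).
  apply: ltnW; rewrite -bi; apply: block_gt => //; first by rewrite ci.
  by rewrite bi ltn_eqF.
Qed.

Lemma colour_at_other m x : (m <= n)%N -> block m <> x ->
  colour_at x (stack m) = colour_at x (stack m.+1).
Proof.
move=> mn bx; case: (step_spec_all mn) => [[_ [d [g [E1 E0 _]]]]|[_ bm E0 _]|
   [_ [d [s [g [E1 E0 _ _]]]]]].
- by rewrite E0 E1 /=; case: eqP.
- by rewrite E0 /=; case: eqP => // mE; case: bx; rewrite bm.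
- by rewrite E0 E1 [in RHS]/colour_at -/colour_at; case: eqP.
Qed.

Lemma colour_at_const x p q : (p <= q)%N -> (q <= n.+1)%N ->
  (forall m, (p <= m < q)%N -> block m <> x) ->
  colour_at x (stack p) = colour_at x (stack q).
Proof.
move=> pq; elim: q pq => [|q IH] pq qn untouched.
  by rewrite leqn0 in pq; rewrite (eqP pq).
move: pq; rewrite leq_eqVlt => /orP[/eqP -> //|pq].
rewrite IH //; [|exact: ltnW| by move=> m /andP[pm mq]; apply: untouched; rewrite pm ltnW].
by apply: colour_at_other => //; apply: untouched; rewrite -ltnS pq ltnSn.
Qed.

Lemma block_alternation i j : (i < j)%N -> (j <= n)%N -> block i = block j ->
  (forall l, (i < l < j)%N -> block l <> block j) -> epsn i = ~~ epsn j.
Proof.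
move=> ij jn bij between; have iN : (i <= n)%N := ltnW (leq_trans ij jn).
have colour_j : colour_at (block j) (stack j) = Some (~~ epsn j).
  case: (step_spec_all jn) => [[_ [d [g [_ E0 _]]]]|[_ bj E0 _]|[Hp _]].
  - by rewrite E0 /= eqxx.
  - by rewrite E0 bj /= eqxx.
  - by have := annihilator_first jn Hp iN bij; rewrite leqNgt ij.
have colour_i : colour_at (block j) (stack i.+1) = Some (~~ epsn j).
  by rewrite -colour_j; apply: colour_at_const => //; exact: leqW.
case: (step_spec_all iN) => [[_ [d [g [E1 _ _]]]]|[_ bi _ _]|[_ [d [s [g [E1 _ _ _]]]]]].
- by move: colour_i; rewrite E1 /= bij eqxx => -[].
- case: (block_range jn) => [bn|[/andP[jb _] _]].
    by move: ij; rewrite -bi bij bn ltnNge jn.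
  by move: jb; rewrite -bij bi leqNgt ij.
- by move: colour_i; rewrite E1 /= bij eqxx => -[].
Qed.

Lemma block_noncrossing a b c d : (a < b)%N -> (b < c)%N -> (c < d)%N -> (d <= n)%N ->
  block a = block c -> block b = block d -> block a <> block b -> False.
Proof.
move=> ab bc cd dN ac bd a_b.
have cN : (c <= n)%N := ltnW (leq_trans cd dN).
have bN : (b <= n)%N := ltnW (leq_trans bc cN).
have aN : (a <= n)%N := ltnW (leq_trans ab bN).
have b_alive_c : alive (acting_time c) (block b).
  apply: (alive_between (acting_time_mono bc) (acting_time_mono cd) (acting_time_bound dN)).
    exact: block_alive.
  by rewrite bd; exact: block_alive.
have a_alive_b : alive (acting_time b) (block a).
  apply: (alive_between (acting_time_mono ab) (acting_time_mono bc) (acting_time_bound cN)).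
    exact: block_alive.
  by rewrite ac; exact: block_alive.
have := block_lt_alive cN b_alive_c; rewrite -ac => /(_ (introN eqP (nesym a_b))) ab_lt.
have := block_lt_alive bN a_alive_b => /(_ (introN eqP a_b)).
by rewrite ltnNge (ltnW ab_lt).
Qed.

Lemma block_extremes_alternate i j : (i <= n)%N -> (j <= n)%N -> block j = block i ->
  (forall l, (l <= n)%N -> block l = block i -> (i <= l)%N) ->
  (forall l, (l <= n)%N -> block l = block i -> (l <= j)%N) ->
  epsn i = ~~ epsn j.
Proof.
move=> iN jN bj least greatest; have [b0 bn _ _ e0n] := run_boundary.
case: (block_range iN) => [bi|[/andP[_ b_lt] b_cr]].
  have -> : i = 0%N by apply/eqP; rewrite -leqn0; apply: least; rewrite ?b0.
  have -> : j = n by apply/eqP; rewrite eqn_leq jN greatest // bn.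
  exact: e0n.
have [a [ab ba _ ea bounds]] := creation_block b_lt b_cr.
have /andP[ai _] := bounds i iN erefl.
have /andP[_ jb] := bounds j jN bj.
have -> : i = a.
  by apply/eqP; rewrite eqn_leq ai (least a) // ltnW // (ltn_trans ab b_lt).
have -> // : j = block i.
by apply/eqP; rewrite eqn_leq jb greatest ?(ltnW b_lt) // block_creation // ltnW.
Qed.

Lemma pwKM_block_inner j : (0 < j)%N -> (j < n)%N -> op j = (pw KM (epsn j), labn j) ->
  (exists2 lo, (lo < j)%N & block lo = block j) /\
  (exists2 hi, (j < hi <= n)%N & block hi = block j).
Proof.
move=> j_gt0 j_lt Hp; have jN := ltnW j_lt; have [b0 bn _ _ _] := run_boundary.
have nc : ~~ is_creation (op j).1 by rewrite Hp is_creation_pwKM.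
case: (block_range jN) => [bj|[/andP[_ b_lt] b_cr]].
  by split; [exists 0%N | exists n]; rewrite ?bj ?b0 ?bn ?j_lt ?leqnn.
have [a [_ ba Hpa _ bounds]] := creation_block b_lt b_cr.
split.
- exists a; last by rewrite ba.
  have /andP[aj _] := bounds j jN erefl.
  rewrite ltn_neqAle aj andbT; apply/eqP => aE.
  by move: Hp; rewrite -aE Hpa; case: (epsn a).
- exists (block j); last exact: block_creation (ltnW b_lt) b_cr.
  by rewrite block_gt ?(ltn_eqF b_lt) ?(ltnW b_lt).
Qed.

Lemma creator_block_ends j : (j < n)%N -> op j = (creator (epsn j), labn j) ->
  (exists2 lo, (lo < j)%N & block lo = block j) /\
  (forall i, (i <= n)%N -> block i = block j -> (i <= j)%N).
Proof.
move=> j_lt Hp; have cj : is_creation (op j).1 by rewrite Hp is_creation_creator.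
have [a [aj ba _ _ bounds]] := creation_block j_lt cj.
rewrite (block_creation (ltnW j_lt) cj); split; first by exists a.
by move=> i iN bi; case/andP: (bounds i iN bi).
Qed.

(** * The partition pi *)

Definition blocks : {set {set 'I_n.+1}} :=
  preim_partition (fun i : 'I_n.+1 => block i) [set: 'I_n.+1].

Lemma blocks_partition : finset.partition blocks [set: 'I_n.+1].
Proof. exact: preim_partitionP. Qed.

Lemma mem_pblock_blocks (i j : 'I_n.+1) :
  (j \in finset.pblock blocks i) = (block i == block j).
Proof.
apply: pblock_equivalence_partition => //.
by move=> x y z _ _ _; split => // /eqP ->.
Qed.

Lemma blocks_memP B : B \in blocks ->
  exists x : 'I_n.+1, forall i, (i \in B) = (block i == block x).
Proof. by move=> /imsetP[x _ ->]; exists x => i; rewrite !inE eq_sym. Qed.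

Lemma blocks_NC : is_NC blocks.
Proof.
split; first exact: blocks_partition.
move=> B B' BP B'P BB' a b c d ab bc cd.
have [x Bx] := blocks_memP BP; have [x' Bx'] := blocks_memP B'P.
rewrite !Bx !Bx' => /eqP ha /eqP hc /eqP hb /eqP hd.
apply: (block_noncrossing ab bc cd (leq_ord d)); [by rewrite ha hc | by rewrite hb hd |].
by move=> e; apply: (negP BB'); apply/eqP/setP => i; rewrite Bx Bx' -ha -hb e.
Qed.

Lemma blocks_NC_irr : is_NC_irr blocks.
Proof.
split; first exact: blocks_NC.
have [b0 bn _ _ _] := run_boundary.
have cov : finset.cover blocks = [set: 'I_n.+1]%SET by case/and3P: blocks_partition => /eqP.
move=> i j i0 jn; exists (finset.pblock blocks i); first by apply: pblock_mem; rewrite cov inE.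
by rewrite mem_pblock cov inE mem_pblock_blocks i0 jn b0 bn eqxx.
Qed.

Lemma blocks_ok B : B \in blocks -> block_ok lab eps B.
Proof.
move=> BP; have [x inB] := blocks_memP BP.
split.
- move=> i j; rewrite !inB => /eqP bi /eqP bj.
  by rewrite -!labnE !labn_block ?leq_ord // bi bj.
- move=> i j; rewrite !inB => /eqP bi /eqP bj ij between.
  rewrite -!epsnE (@block_alternation i j) ?leq_ord ?bi ?bj //; first by case: (epsn j).
  move=> l /andP[il lj] bl; have l_lt : (l < n.+1)%N := ltn_trans lj (ltn_ord j).
  by apply: (between (Ordinal l_lt)); [rewrite inB /= bl ?bj | split].
- move=> i j; rewrite !inB => /eqP bi /eqP bj least greatest.
  rewrite -!epsnE (@block_extremes_alternate i j) ?leq_ord ?bi ?bj //; first by case: (epsn j).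
  + move=> l lN bl; apply: (least (Ordinal (lN : (l < n.+1)%N))).
    by rewrite inB /= bl ?bi.
  + move=> l lN bl; apply: (greatest (Ordinal (lN : (l < n.+1)%N))).
    by rewrite inB /= bl ?bi.
Qed.

Lemma least_in_blockP (j : 'I_n.+1) :
  reflect (forall i, (i <= n)%N -> block i = block j -> (j <= i)%N)
          [forall i in finset.pblock blocks j, (j <= i)%N].
Proof.
apply: (iffP forall_inP) => [least i iN bi|least i].
- by have := least (inord i); rewrite mem_pblock_blocks inordK // bi eqxx => /(_ isT).
- by rewrite mem_pblock_blocks => /eqP bi; apply: least (leq_ord i) _; rewrite bi.
Qed.

Lemma greatest_in_blockP (j : 'I_n.+1) :
  reflect (forall i, (i <= n)%N -> block i = block j -> (i <= j)%N)
          [forall i in finset.pblock blocks j, (i <= j)%N].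
Proof.
apply: (iffP forall_inP) => [greatest i iN bi|greatest i].
- by have := greatest (inord i); rewrite mem_pblock_blocks inordK // bi eqxx => /(_ isT).
- by rewrite mem_pblock_blocks => /eqP bi; apply: greatest (leq_ord i) _; rewrite bi.
Qed.

Lemma psi_phi_pi : psi =1 phi_pi blocks lab eps.
Proof.
move=> j; have [_ _ Hp0 Hpn _] := run_boundary.
rewrite /phi_pi -opE -epsnE -labnE /=.
case: (eqVneq (nat_of_ord j) 0%N) => [-> //|j0].
case: (eqVneq (nat_of_ord j) n) => [-> //|jn].
have j_gt0 : (0 < j)%N by rewrite lt0n.
have j_lt : (j < n)%N by rewrite ltn_neqAle jn leq_ord.
have not_least lo : (lo < j)%N -> block lo = block j ->
    [forall i in finset.pblock blocks j, (j <= i)%N] = false.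
  move=> lo_lt blo; apply: (introF (least_in_blockP j)) => least.
  by have := least lo (ltnW (ltn_trans lo_lt j_lt)) blo; rewrite leqNgt lo_lt.
rewrite /=.
case: (op_shape (leq_ord j)) => Hp.
- have [[lo lo_lt blo] [hi /andP[hi_gt hiN] bhi]] := pwKM_block_inner j_gt0 j_lt Hp.
  have -> : [forall i in finset.pblock blocks j, (i <= j)%N] = false.
    apply: (introF (greatest_in_blockP j)) => greatest.
    by have := greatest hi hiN bhi; rewrite leqNgt hi_gt.
  by rewrite (not_least lo) // Hp; case: (epsn j).
- have [[lo lo_lt blo] greatest] := creator_block_ends j_lt Hp.
  rewrite (not_least lo) // (introT (greatest_in_blockP j) greatest).
  by rewrite Hp; case: (epsn j).
- rewrite (introT (least_in_blockP j) (annihilator_first (leq_ord j) Hp)).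
  by rewrite Hp; case: (epsn j).
Qed.

Theorem run_structure :
  [/\ k = k', (forall j : 'I_n.+1, nat_of_ord j = 0%N -> lab j = k),
      (forall j : 'I_n.+1, nat_of_ord j = n -> lab j = k)
    & exists P : {set {set 'I_n.+1}},
        [/\ is_NC P, is_NC_irr P, (forall B, B \in P -> block_ok lab eps B)
          & psi =1 phi_pi P lab eps]].
Proof.
have [kk' _] := final_pairing; have [b0 bn _ _ _] := run_boundary.
split => //.
- by move=> j j0; rewrite -labnE j0 labn_block // b0 /slot_index eqxx.
- by move=> j jn; rewrite -labnE jn labn_block // bn /slot_index eqxx.
- exists blocks; split; [exact: blocks_NC | exact: blocks_NC_irr | |].
  + exact: blocks_ok.
  + exact: psi_phi_pi.
Qed.

End Run.


Theorem lemma4p3 (R : realType) (N : nat)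
  (sigma : 'I_N -> {finite_measure set R -> \bar R})
  (Hsym : forall (k : 'I_N) (A : set R), measurable A ->
            sigma k ((fun x : R => - x) @` A) = sigma k A)
  (Hcpt : forall k : 'I_N, exists C : R, sigma k [set x : R | C < `|x|] = 0%E)
  (Rn : nat) (HR : (0 < Rn)%N)
  (eps : 'I_Rn -> bool) (iota : 'I_Rn -> 'I_N) (psi : 'I_Rn -> opkind * 'I_N)
  (Ha : forall j : 'I_Rn, nat_of_ord j = 0%N ->
          if eps j then psi j = (KMs, iota j) \/ psi j = (KDs, iota j)
          else psi j = (KM, iota j) \/ psi j = (KAs, iota j))
  (Hb : forall j : 'I_Rn, nat_of_ord j = Rn.-1 ->
          if eps j then psi j = (KMs, iota j) \/ psi j = (KA, iota j)
          else psi j = (KM, iota j) \/ psi j = (KD, iota j))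
  (Hc : forall j : 'I_Rn, (0 < j)%N -> (j < Rn.-1)%N ->
          [\/ psi j = (pw KM (eps j), iota j),
              psi j = (pw KAs (eps j), iota j)
            | psi j = (pw KD (eps j), iota j)])
  (k k' : 'I_N) :
  ipv sigma (apply_ops sigma [seq psi j | j <- enum 'I_Rn] (eta R k)) (eta R k') <> 0 ->
  [/\ k = k',
      (forall j : 'I_Rn, nat_of_ord j = 0%N -> iota j = k),
      (forall j : 'I_Rn, nat_of_ord j = Rn.-1 -> iota j = k)
    & exists P : {set {set 'I_Rn}},
        [/\ is_NC P, is_NC_irr P,
            (forall B, B \in P -> block_ok iota eps B)
          & psi =1 phi_pi P iota eps]].
Proof.
case: Rn HR eps iota psi Ha Hb Hc => [//|n] _ eps iota psi Ha Hb Hc nz.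
have [c0 nz_c0] : exists c0, ipv sigma (run_vec sigma psi k c0 0) (eta R k') != 0.
  move: nz; rewrite -[eta R k]/(init R k false ++ init R k true).
  rewrite apply_ops_cat ipv_catl -!run_vec0E.
  have [h0|] := eqVneq (ipv sigma (run_vec sigma psi k false 0) (eta R k')) 0.
    by exists true; apply/eqP => h1; apply: nz; rewrite h0 h1 addr0.
  by exists false.
exact: (run_structure Hsym Ha Hb Hc nz_c0).
Qed.
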